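(* Let $(a,D)$ be a weak hyperoperator on $\mathbb{R}$ in the complex Banach space $X$, and assume that for each $z\in\mathbb{C}\setminus\mathbb{R}$ the closure of $r_z(a)$ is a bounded operator on $X$, where $r_z(\xi)=1/(z-\xi)$. Then the closure $\bar a$ of $a$ has real spectrum in the usual sense, i.e. every $z\in\mathbb{C}\setminus\mathbb{R}$ belongs to the resolvent set of $\bar a$.
   Context: $X$ is a complex Banach space. $\mathcal{E}(\mathbb{R})=C^\infty(\mathbb{R})$ (complex-valued) with the topology of uniform convergence of all derivatives on compacts; $r_z\in\mathcal{E}(\mathbb{R})$ for $z\notin\mathbb{R}$. For a dense subspace $D\subset X$, $\mathbf{L}(D)$ is the set of closable linear operators $D\to D$. A weak hyperoperator $(a,D)$ on $\mathbb{R}$ is a linear operator $a:D\to D$, $D$ dense, $a$ closable, together with a linear multiplicative map $\mathcal{E}(\mathbb{R})\to\mathbf{L}(D)$, $h\mapsto h(a)$, sending each polynomial $p$ to $p(a)$, such that $h_k(a)x\to h(a)x$ for all $x\in D$ whenever $h_k\to h$ in $\mathcal{E}(\mathbb{R})$. *)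

From Stdlib Require Import Reals List.
From Coquelicot Require Import Coquelicot.
Open Scope R_scope.

Section Defs.
Context {X : CompleteNormedModule C_AbsRing}.

Definition is_subspace (D : X -> Prop) : Prop :=
  D zero /\ (forall x y, D x -> D y -> D (plus x y)) /\
  (forall (c : C) x, D x -> D (scal c x)).

Definition is_dense (D : X -> Prop) : Prop :=
  forall x (eps : R), 0 < eps -> exists d, D d /\ norm (minus x d) < eps.

(* a linear operator D -> D (values of T outside D are irrelevant) *)
Definition linear_on (D : X -> Prop) (T : X -> X) : Prop :=
  (forall x, D x -> D (T x)) /\
  (forall x y, D x -> D y -> T (plus x y) = plus (T x) (T y)) /\
  (forall (c : C) x, D x -> T (scal c x) = scal c (T x)).

Definition graph_closure (D : X -> Prop) (T : X -> X) (x y : X) : Prop :=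
  forall eps : R, 0 < eps -> exists d, D d /\
    norm (minus d x) < eps /\ norm (minus (T d) y) < eps.

Definition closable (D : X -> Prop) (T : X -> X) : Prop :=
  forall y, graph_closure D T zero y -> y = zero.

Definition in_LD (D : X -> Prop) (T : X -> X) : Prop :=
  linear_on D T /\ closable D T.

Definition bounded_linear (B : X -> X) : Prop :=
  (forall x y, B (plus x y) = plus (B x) (B y)) /\
  (forall (c : C) x, B (scal c x) = scal c (B x)) /\
  (exists M : R, forall x, norm (B x) <= M * norm x).

(* p(a) x for the polynomial with coefficient list cs = [c0; c1; ...],
   computed by Horner: c0 x + a (c1 x + a (c2 x + ...)) *)
Definition poly_op (a : X -> X) (cs : list C) (x : X) : X :=
  fold_right (fun c acc => plus (scal c x) (a acc)) zero cs.

End Defs.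

Definition poly_fun (cs : list C) (t : R) : C :=
  fold_right (fun c acc => Cplus c (Cmult (RtoC t) acc)) (RtoC 0) cs.

Definition smooth (h : R -> C) : Prop :=
  forall (n : nat) (t : R),
    ex_derive_n (fun s => Re (h s)) n t /\ ex_derive_n (fun s => Im (h s)) n t.

Definition cderive_n (h : R -> C) (n : nat) (t : R) : C :=
  (Derive_n (fun s => Re (h s)) n t, Derive_n (fun s => Im (h s)) n t).

(* h_k -> h in E(R): uniform convergence of all derivatives on compacts
   (every compact of R lies in some [-M, M]) *)
Definition E_conv (hs : nat -> R -> C) (h : R -> C) : Prop :=
  forall (n : nat) (M eps : R), 0 < eps -> exists K : nat, forall k : nat,
    (K <= k)%nat -> forall t, Rabs t <= M ->
      Cmod (Cminus (cderive_n (hs k) n t) (cderive_n h n t)) < eps.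

Definition cmul_fun (h g : R -> C) : R -> C := fun t => Cmult (h t) (g t).
Definition cadd_fun (h g : R -> C) : R -> C := fun t => Cplus (h t) (g t).
Definition cscal_fun (c : C) (h : R -> C) : R -> C := fun t => Cmult c (h t).

Definition r_fun (z : C) : R -> C := fun t => Cinv (Cminus z (RtoC t)).

Section Hyper.
Context {X : CompleteNormedModule C_AbsRing}.

Definition seq_conv (u : nat -> X) (l : X) : Prop :=
  forall eps : R, 0 < eps -> exists N : nat, forall n : nat,
    (N <= n)%nat -> norm (minus (u n) l) < eps.

Definition weak_hyperoperator (D : X -> Prop) (a : X -> X)
    (Phi : (R -> C) -> X -> X) : Prop :=
  is_subspace D /\ is_dense D /\ in_LD D a /\
  (forall h, smooth h -> in_LD D (Phi h)) /\
  (forall h g x, smooth h -> smooth g -> D x ->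
     Phi (cadd_fun h g) x = plus (Phi h x) (Phi g x)) /\
  (forall (c : C) h x, smooth h -> D x ->
     Phi (cscal_fun c h) x = scal c (Phi h x)) /\
  (forall h g x, smooth h -> smooth g -> D x ->
     Phi (cmul_fun h g) x = Phi h (Phi g x)) /\
  (forall cs x, D x -> Phi (poly_fun cs) x = poly_op a cs x) /\
  (forall hs h, (forall k, smooth (hs k)) -> smooth h -> E_conv hs h ->
     forall x, D x -> seq_conv (fun k => Phi (hs k) x) (Phi h x)).

(* z is in the resolvent set of the closure abar of a (graph of abar =
   graph_closure D a): z - abar is a bijection dom(abar) -> X whose inverse
   is a bounded operator on X *)
Definition in_resolvent_of_closure (D : X -> Prop) (a : X -> X) (z : C) : Prop :=
  exists Rz : X -> X, bounded_linear Rz /\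
    (forall y, graph_closure D a (Rz y) (minus (scal z (Rz y)) y)) /\
    (forall x w, graph_closure D a x w -> Rz (minus (scal z x) w) = x).

End Hyper.

From Stdlib Require Import Reals List Lra FunctionalExtensionality.
From Coquelicot Require Import Coquelicot.
Open Scope R_scope.

(* For non-real z, r_z(t) (z - t) = 1 with both factors in E(R) and
   z - t a polynomial, so multiplicativity of the calculus makes r_z(a) a
   two-sided inverse of z - a on D.  The bounded closure B of r_z(a) then
   inverts z - abar: by density of D and continuity of B, (B y, z B y - y) lies
   in the graph of abar for every y, and B (z x - w) = x for every (x, w) in
   that graph.  Smoothness of r_z holds because its real and imaginary parts
   lie in the span of the functions c (Re z - t)^m / |z - t|^(2k), which is
   closed under differentiation. *)

Lemma ex_derive_n_of_derive_closed (P : (R -> R) -> Prop) :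
  (forall f, P f -> exists f', P f' /\ forall t, is_derive f t (f' t)) ->
  forall f, P f -> forall n t, ex_derive_n f n t.
Proof.
  intros Hclosed.
  assert (HDn : forall n f, P f -> exists g, P g /\ forall t, Derive_n f n t = g t).
  { induction n as [|n IH]; intros f Pf.
    - exists f. split; [exact Pf | reflexivity].
    - destruct (IH f Pf) as [g [Pg Eg]].
      destruct (Hclosed g Pg) as [g' [Pg' Hg']].
      exists g'. split; [exact Pg' |]. intro t. simpl.
      rewrite (Derive_ext _ g t Eg). apply is_derive_unique, Hg'. }
  intros f Pf [|n] t; [exact I |]. simpl.
  destruct (HDn n f Pf) as [g [Pg Eg]].
  destruct (Hclosed g Pg) as [g' [_ Hg']].
  apply ex_derive_ext with g; [intro s; symmetry; apply Eg |].
  exists (g' t). apply Hg'.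
Qed.

Section ResolventTerms.
Variables (re im : R).
Hypothesis im_neq0 : im <> 0.

Definition dist_sq (t : R) : R := (re - t) ^ 2 + im ^ 2.

Lemma dist_sq_pos (t : R) : 0 < dist_sq t.
Proof.
  unfold dist_sq.
  pose proof (pow2_ge_0 (re - t)). pose proof (pow2_gt_0 im im_neq0). lra.
Qed.

Definition term_eval (e : R * nat * nat) (t : R) : R :=
  let '(c, m, k) := e in c * (re - t) ^ m * (/ dist_sq t) ^ k.

Definition terms_eval (l : list (R * nat * nat)) (t : R) : R :=
  fold_right (fun e acc => term_eval e t + acc) 0 l.

Definition term_deriv (e : R * nat * nat) : list (R * nat * nat) :=
  let '(c, m, k) := e in
  (- (c * INR m), pred m, k) :: (2 * c * INR k, S m, S k) :: nil.

Definition terms_deriv (l : list (R * nat * nat)) : list (R * nat * nat) :=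
  flat_map term_deriv l.

Lemma terms_eval_app (l1 l2 : list (R * nat * nat)) (t : R) :
  terms_eval (l1 ++ l2) t = terms_eval l1 t + terms_eval l2 t.
Proof.
  induction l1 as [|e l1 IH]; simpl; [ring |].
  unfold terms_eval in *. simpl. rewrite IH. ring.
Qed.

Lemma is_derive_term_eval (e : R * nat * nat) (t : R) :
  is_derive (term_eval e) t (terms_eval (term_deriv e) t).
Proof.
  destruct e as [[c m] k]. unfold term_eval, term_deriv, terms_eval; simpl.
  pose proof (dist_sq_pos t) as Hq.
  assert (Hlin : is_derive (fun t => re - t) t (-1)) by (auto_derive; [auto | ring]).
  assert (Hinv : is_derive (fun t => / dist_sq t) t (2 * (re - t) * (/ dist_sq t) ^ 2)).
  { unfold dist_sq in *. auto_derive; [lra | field; lra]. }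
  apply (is_derive_pow _ m) in Hlin. apply (is_derive_pow _ k) in Hinv.
  apply is_derive_ext with (f := fun t => c * ((re - t) ^ m * (/ dist_sq t) ^ k)).
  { intro s. symmetry. apply Rmult_assoc. }
  replace (- (c * INR m) * (re - t) ^ pred m * (/ dist_sq t) ^ k +
           (2 * c * INR k * ((re - t) * (re - t) ^ m) * (/ dist_sq t * (/ dist_sq t) ^ k)
            + 0))
    with (c * (INR m * -1 * (re - t) ^ pred m * (/ dist_sq t) ^ k +
               (re - t) ^ m * (INR k * (2 * (re - t) * (/ dist_sq t) ^ 2)
                              * (/ dist_sq t) ^ pred k)))
    by (destruct k; simpl; ring).
  apply is_derive_scal, Derive.is_derive_mult; auto.
Qed.

Lemma is_derive_terms_eval (l : list (R * nat * nat)) (t : R) :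
  is_derive (terms_eval l) t (terms_eval (terms_deriv l) t).
Proof.
  induction l as [|e l IH]; simpl.
  - exact (is_derive_const 0 t).
  - unfold terms_deriv. simpl. rewrite terms_eval_app.
    apply (is_derive_plus (term_eval e) (terms_eval l)); [apply is_derive_term_eval | exact IH].
Qed.

Lemma ex_derive_n_terms_eval (l : list (R * nat * nat)) (n : nat) (t : R) :
  ex_derive_n (terms_eval l) n t.
Proof.
  apply (ex_derive_n_of_derive_closed (fun f => exists l, forall t, f t = terms_eval l t)).
  - intros f [l' Ef]. exists (terms_eval (terms_deriv l')). split; [now exists (terms_deriv l') |].
    intro s. apply is_derive_ext with (terms_eval l'); [intro; symmetry; apply Ef |].
    apply is_derive_terms_eval.
  - now exists l.
Qed.

Lemma smooth_of_terms (h : R -> C) (l1 l2 : list (R * nat * nat)) :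
  (forall t, Re (h t) = terms_eval l1 t) -> (forall t, Im (h t) = terms_eval l2 t) ->
  smooth h.
Proof.
  intros Ere Eim n t. split.
  - apply ex_derive_n_ext with (terms_eval l1); [intro; symmetry; apply Ere |].
    apply ex_derive_n_terms_eval.
  - apply ex_derive_n_ext with (terms_eval l2); [intro; symmetry; apply Eim |].
    apply ex_derive_n_terms_eval.
Qed.

End ResolventTerms.

Lemma smooth_r_fun (z : C) : Im z <> 0 -> smooth (r_fun z).
Proof.
  destruct z as [re im]. simpl. intro im_neq0.
  pose proof (dist_sq_pos re im im_neq0) as Hq.
  apply (smooth_of_terms re im im_neq0 _ ((1, 1%nat, 1%nat) :: nil) ((- im, 0%nat, 1%nat) :: nil));
    intro t; specialize (Hq t); unfold dist_sq in Hq;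
    unfold r_fun, terms_eval, term_eval, dist_sq, Cinv, Cminus, RtoC; simpl in *;
    field; lra.
Qed.

(* Only terms with k = 0 are needed, so the dummy imaginary part 1 is harmless. *)
Lemma smooth_poly_fun_deg1 (z : C) : smooth (poly_fun (z :: opp one :: nil)).
Proof.
  destruct z as [re im].
  apply (smooth_of_terms re 1 R1_neq_R0 _ ((1, 1%nat, 0%nat) :: nil) ((im, 0%nat, 0%nat) :: nil));
    intro t; unfold poly_fun, terms_eval, term_eval; simpl; ring.
Qed.

Lemma r_fun_mul_poly_fun_deg1 (z : C) : Im z <> 0 ->
  cmul_fun (r_fun z) (poly_fun (z :: opp one :: nil)) = poly_fun (one :: nil).
Proof.
  intro hz. apply functional_extensionality. intro t.
  unfold cmul_fun, r_fun.
  replace (poly_fun (z :: opp one :: nil) t) with (Cminus z (RtoC t)).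
  2:{ unfold poly_fun. simpl. apply injective_projections; simpl; ring. }
  rewrite Cinv_l.
  - unfold poly_fun. simpl. apply injective_projections; simpl; ring.
  - intro Hzt. apply hz. apply (f_equal Im) in Hzt. simpl in Hzt. unfold Im. lra.
Qed.

Lemma cmul_fun_comm (h g : R -> C) : cmul_fun h g = cmul_fun g h.
Proof. apply functional_extensionality. intro t. apply Cmult_comm. Qed.

Section AbelianGroupFacts.
Context {G : AbelianGroup}.

Lemma minus_minus_r (x y : G) : minus x (minus x y) = y.
Proof.
  unfold minus. rewrite (opp_plus (G:=G)), opp_opp, plus_assoc, (plus_opp_r (G:=G)).
  apply plus_zero_l.
Qed.

Lemma minus_minus_exchange (x y u v : G) :
  minus (minus x u) (minus y v) = minus (minus x y) (minus u v).
Proof.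
  unfold minus. rewrite !(opp_plus (G:=G)), !(opp_opp (G:=G)), <- !plus_assoc.
  f_equal. rewrite !plus_assoc. f_equal. apply plus_comm.
Qed.

Lemma minus_eq_zero_eq (x y : G) : minus x y = zero -> x = y.
Proof.
  intro Hxy. rewrite <- (minus_minus_r x y), Hxy. symmetry. apply minus_zero_r.
Qed.

End AbelianGroupFacts.

Section NormedModuleFacts.
Context {K : AbsRing} {V : NormedModule K}.

Lemma norm_minus_sym (u v : V) : norm (minus u v) = norm (minus v u).
Proof. rewrite <- opp_minus. apply norm_opp. Qed.

Lemma eq_of_norm_minus_lt (u v : V) :
  (forall eps, 0 < eps -> norm (minus u v) < eps) -> u = v.
Proof.
  intro Hsmall. apply minus_eq_zero_eq, norm_eq_zero.
  apply Rle_antisym; [| apply norm_ge_0].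
  apply Rle_plus_epsilon. intros eps Heps.
  rewrite Rplus_0_l. apply Rlt_le, Hsmall, Heps.
Qed.

Lemma norm_scal_minus_minus (c : K) (u v p q : V) :
  norm (minus (minus (scal c u) p) (minus (scal c v) q))
  <= abs c * norm (minus u v) + norm (minus p q).
Proof.
  rewrite minus_minus_exchange, <- scal_minus_distr_l.
  eapply Rle_trans; [apply norm_triangle |].
  rewrite (norm_opp (V:=V)). apply Rplus_le_compat_r, norm_scal.
Qed.

End NormedModuleFacts.

Section LinearOn.
Context {X : CompleteNormedModule C_AbsRing}.
Local Notation XM := (CompleteNormedModule.ModuleSpace C_AbsRing X).
Local Notation XN := (CompleteNormedModule.NormedModule C_AbsRing X).
Variables (D : X -> Prop) (T : X -> X).
Hypothesis T_linear : linear_on D T.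

Lemma linear_on_zero (x : X) : D x -> T zero = zero.
Proof.
  intro Dx. destruct T_linear as [_ [_ Tscal]].
  transitivity (T (scal zero x)).
  - f_equal. exact (eq_sym (scal_zero_l (V:=XM) x)).
  - rewrite Tscal by exact Dx. exact (scal_zero_l (V:=XM) (T x)).
Qed.

Lemma graph_closure_of_dom (x : X) : D x -> graph_closure D T x (T x).
Proof.
  intros Dx eps Heps. exists x. split; [exact Dx |].
  split; apply Rle_lt_trans with 0; try exact Heps;
    apply Req_le; rewrite minus_eq_zero; exact (norm_zero (V:=XN)).
Qed.

Lemma subspace_minus (x y : X) :
  is_subspace D -> D x -> D y -> D (minus x y).
Proof.
  intros [_ [Dplus Dscal]] Dx Dy. apply Dplus; [exact Dx |].
  replace (opp y) with (scal (opp one) y) by exact (scal_opp_one (V:=XM) y).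
  apply Dscal, Dy.
Qed.

Lemma linear_on_scal_minus_dom (z : C) (x : X) :
  is_subspace D -> D x -> D (minus (scal z x) (T x)).
Proof.
  intros D_subspace Dx. pose proof D_subspace as [_ [_ Dscal]].
  destruct T_linear as [TD _].
  exact (subspace_minus _ _ D_subspace (Dscal z x Dx) (TD x Dx)).
Qed.

Lemma poly_op_one (x : X) : D x -> poly_op T (one :: nil) x = x.
Proof.
  intro Dx. simpl. rewrite (linear_on_zero x Dx), plus_zero_r. apply scal_one.
Qed.

Lemma poly_op_deg1 (z : C) (x : X) :
  D x -> poly_op T (z :: opp one :: nil) x = minus (scal z x) (T x).
Proof.
  intro Dx. destruct T_linear as [_ [_ Tscal]]. simpl.
  rewrite (linear_on_zero x Dx), plus_zero_r, Tscal by exact Dx.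
  rewrite scal_opp_one. reflexivity.
Qed.

End LinearOn.

Section BoundedInverse.
Context {X : CompleteNormedModule C_AbsRing}.
Local Notation XN := (CompleteNormedModule.NormedModule C_AbsRing X).

Lemma bounded_linear_minus (B : X -> X) :
  bounded_linear B -> forall x y, B (minus x y) = minus (B x) (B y).
Proof.
  intros [Bplus [Bscal _]] x y. unfold minus.
  rewrite Bplus, <- !(scal_opp_one (V:=X)), Bscal. reflexivity.
Qed.

Lemma bounded_linear_pos_bound (B : X -> X) :
  bounded_linear B -> exists M, 0 < M /\ forall x, norm (B x) <= M * norm x.
Proof.
  intros [_ [_ [M HM]]]. exists (Rabs M + 1). split.
  - pose proof (Rabs_pos M). lra.
  - intro x. eapply Rle_trans; [apply HM |].
    apply Rmult_le_compat_r; [apply norm_ge_0 |].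
    pose proof (Rle_abs M). lra.
Qed.

Variables (D : X -> Prop) (a B : X -> X) (z : C).
Hypothesis B_bounded : bounded_linear B.

Lemma graph_closure_by_bounded_inverse :
  is_dense D -> (forall d, D d -> D (B d)) ->
  (forall d, D d -> minus (scal z (B d)) (a (B d)) = d) ->
  forall y, graph_closure D a (B y) (minus (scal z (B y)) y).
Proof.
  intros Ddense BD Bright y eps Heps.
  destruct (bounded_linear_pos_bound B B_bounded) as [M [HM0 HM]].
  set (C := M * (Cmod z + 1) + 1).
  assert (HC : 0 < C) by (unfold C; pose proof (Cmod_ge_0 z); nra).
  destruct (Ddense y (eps / C)) as [d [Dd Hd]].
  { apply Rdiv_lt_0_compat; assumption. }
  rewrite (norm_minus_sym (V:=XN)) in Hd.
  set (e := norm (minus d y)) in *.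
  assert (He : C * e < eps).
  { replace eps with (C * (eps / C)) by (field; lra).
    apply Rmult_lt_compat_l; assumption. }
  assert (HBd : norm (minus (B d) (B y)) <= M * e).
  { rewrite <- bounded_linear_minus by assumption. apply HM. }
  assert (HCe : M * e <= C * e /\ Cmod z * (M * e) + e <= C * e).
  { assert (0 <= e) by apply norm_ge_0.
    assert (0 <= M * Cmod z * e)
      by (apply Rmult_le_pos; [apply Rmult_le_pos; [lra | apply Cmod_ge_0] | lra]).
    unfold C. split; nra. }
  exists (B d). split; [| split].
  - apply BD, Dd.
  - lra.
  - assert (Ha : a (B d) = minus (scal z (B d)) d).
    { transitivity (minus (scal z (B d)) (minus (scal z (B d)) (a (B d)))).
      - rewrite minus_minus_r. reflexivity.
      - rewrite Bright by exact Dd. reflexivity. }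
    rewrite Ha.
    eapply Rle_lt_trans; [apply (norm_scal_minus_minus (V:=XN)) |].
    apply (Rle_lt_trans _ (Cmod z * (M * e) + e)); [| lra].
    apply Rplus_le_compat; [| apply Rle_refl].
    apply Rmult_le_compat_l; [apply Cmod_ge_0 | exact HBd].
Qed.

Lemma bounded_inverse_on_graph_closure :
  (forall d, D d -> B (minus (scal z d) (a d)) = d) ->
  forall x w, graph_closure D a x w -> B (minus (scal z x) w) = x.
Proof.
  intros Bleft x w Hxw. apply (eq_of_norm_minus_lt (V:=XN)). intros eps Heps.
  destruct (bounded_linear_pos_bound B B_bounded) as [M [HM0 HM]].
  set (C := M * (Cmod z + 1) + 1).
  assert (HC : 0 < C) by (unfold C; pose proof (Cmod_ge_0 z); nra).
  destruct (Hxw (eps / C)) as [d [Dd [Hdx Hadw]]].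
  { apply Rdiv_lt_0_compat; assumption. }
  set (e1 := norm (minus d x)) in Hdx. set (e2 := norm (minus (a d) w)) in Hadw.
  rewrite (minus_trans d), <- (Bleft d Dd) at 1.
  rewrite <- bounded_linear_minus by assumption.
  eapply Rle_lt_trans; [apply (norm_triangle (V:=XN)) |].
  eapply Rle_lt_trans.
  { apply Rplus_le_compat_r, Rle_trans with (1 := HM _).
    apply Rmult_le_compat_l; [lra |].
    apply (norm_scal_minus_minus (V:=XN)). }
  change (abs z) with (Cmod z).
  rewrite (norm_minus_sym (V:=XN) x d), (norm_minus_sym (V:=XN) w (a d)).
  change (M * (Cmod z * e1 + e2) + e1 < eps).
  replace eps with (C * (eps / C)) by (field; lra).
  set (delta := eps / C) in *. unfold C.
  pose proof (Cmod_ge_0 z).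
  assert (M * Cmod z * e1 <= M * Cmod z * delta)
    by (apply Rmult_le_compat_l; [nra | lra]).
  assert (M * e2 <= M * delta) by (apply Rmult_le_compat_l; lra).
  nra.
Qed.

Lemma resolvent_of_closure_of_bounded_inverse :
  is_dense D -> (forall d, D d -> D (B d)) ->
  (forall d, D d -> B (minus (scal z d) (a d)) = d) ->
  (forall d, D d -> minus (scal z (B d)) (a (B d)) = d) ->
  in_resolvent_of_closure D a z.
Proof.
  intros D_dense BD Bleft Bright. exists B. split; [exact B_bounded | split].
  - apply graph_closure_by_bounded_inverse; assumption.
  - apply bounded_inverse_on_graph_closure, Bleft.
Qed.

End BoundedInverse.

Section WeakHyperoperator.
Context {X : CompleteNormedModule C_AbsRing}.
Variables (D : X -> Prop) (a : X -> X) (Phi : (R -> C) -> X -> X).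
Hypothesis Phi_calculus : weak_hyperoperator D a Phi.

Lemma Phi_maps_dom (h : R -> C) (x : X) : smooth h -> D x -> D (Phi h x).
Proof.
  intros Hh Dx. destruct Phi_calculus as [_ [_ [_ [HPhiL _]]]].
  destruct (HPhiL h Hh) as [[PhiD _] _]. exact (PhiD x Dx).
Qed.

Lemma Phi_mul_eq_one (h g : R -> C) :
  smooth h -> smooth g -> cmul_fun h g = poly_fun (one :: nil) ->
  forall x, D x -> Phi h (Phi g x) = x.
Proof.
  intros Hh Hg Ehg x Dx.
  destruct Phi_calculus as [_ [_ [[a_linear _] [_ [_ [_ [Hmul [Hpoly _]]]]]]]].
  rewrite <- Hmul, Ehg, Hpoly by assumption.
  exact (poly_op_one D a a_linear x Dx).
Qed.

Lemma Phi_poly_fun_deg1 (z : C) (x : X) :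
  D x -> Phi (poly_fun (z :: opp one :: nil)) x = minus (scal z x) (a x).
Proof.
  intro Dx. destruct Phi_calculus as [_ [_ [[a_linear _] [_ [_ [_ [_ [Hpoly _]]]]]]]].
  rewrite Hpoly by exact Dx. exact (poly_op_deg1 D a a_linear z x Dx).
Qed.

Lemma Phi_r_fun_left_inverse (z : C) : Im z <> 0 ->
  forall d, D d -> Phi (r_fun z) (minus (scal z d) (a d)) = d.
Proof.
  intros hz d Dd. rewrite <- Phi_poly_fun_deg1 by exact Dd.
  apply Phi_mul_eq_one; [apply smooth_r_fun, hz | apply smooth_poly_fun_deg1 |
                         apply r_fun_mul_poly_fun_deg1, hz | exact Dd].
Qed.

Lemma Phi_r_fun_right_inverse (z : C) : Im z <> 0 ->
  forall d, D d -> minus (scal z (Phi (r_fun z) d)) (a (Phi (r_fun z) d)) = d.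
Proof.
  intros hz d Dd. pose proof (smooth_r_fun z hz) as Hr.
  rewrite <- Phi_poly_fun_deg1 by (apply Phi_maps_dom; assumption).
  apply Phi_mul_eq_one; [apply smooth_poly_fun_deg1 | exact Hr | | exact Dd].
  rewrite cmul_fun_comm. apply r_fun_mul_poly_fun_deg1, hz.
Qed.

End WeakHyperoperator.

Theorem proposition5p7 (X : CompleteNormedModule C_AbsRing)
  (D : X -> Prop) (a : X -> X) (Phi : (R -> C) -> X -> X) :
  weak_hyperoperator D a Phi ->
  (forall z : C, Im z <> 0 ->
     exists B : X -> X, bounded_linear B /\
       (forall x y, graph_closure D (Phi (r_fun z)) x y <-> y = B x)) ->
  forall z : C, Im z <> 0 -> in_resolvent_of_closure D a z.
Proof.
  intros Phi_calculus r_bounded z hz.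
  destruct (r_bounded z hz) as [B [B_bounded B_closure]].
  pose proof Phi_calculus as [D_subspace [D_dense [[a_linear _] _]]].
  assert (Phi_r_eq_B : forall d, D d -> Phi (r_fun z) d = B d).
  { intros d Dd. apply B_closure, graph_closure_of_dom, Dd. }
  apply (resolvent_of_closure_of_bounded_inverse D a B z B_bounded D_dense);
    intros d Dd.
  - rewrite <- Phi_r_eq_B by exact Dd.
    apply (Phi_maps_dom D a Phi Phi_calculus); [apply smooth_r_fun, hz | exact Dd].
  - rewrite <- Phi_r_eq_B by exact (linear_on_scal_minus_dom D a a_linear z d D_subspace Dd).
    apply (Phi_r_fun_left_inverse D a Phi Phi_calculus z hz d Dd).
  - rewrite <- Phi_r_eq_B by exact Dd.
    apply (Phi_r_fun_right_inverse D a Phi Phi_calculus z hz d Dd).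
Qed.
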